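(* Let $n\ge 1$. Under optimal play, the Sign Game on the star graph $S_n$ results in a draw when $n$ is even, and is won by Player 2 when $n$ is odd.
   Context: The Sign Game on a finite simple undirected graph $G$: two players, Player P and Player N, alternate turns; the player who moves first is called Player 1 and the other Player 2 (either of P, N may be Player 1). On a turn, a player chooses a vertex of $G$ not yet assigned a value and assigns it $+1$ or $-1$. The game ends when every vertex has been assigned. The score of an edge $uv$ is the product of the values of $u$ and $v$, and the score $s(G)$ of the game is the sum of the scores of all edges. Player P wins if $s(G)>0$, Player N wins if $s(G)<0$, and the game is a draw if $s(G)=0$. ''Under optimal play'' means both players play optimally, each with primary goal of winning and secondary goal of at least drawing; the result is the outcome of this finite perfect-information game under such play. The star graph $S_n$ has $n+1$ vertices: one central vertex adjacent to each of $n$ leaves, with no other edges. *)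

From mathcomp Require Import all_boot all_order all_algebra.
Set Implicit Arguments. Unset Strict Implicit. Unset Printing Implicit Defensive.
Import Order.TTheory GRing.Theory Num.Theory.
Local Open Scope ring_scope.

(* A finite simple graph on vertex set 'I_m is given by an adjacency
   relation [e]; we use it only when it is symmetric and irreflexive.
   A (partial) assignment is a finite function to int: 0 = unassigned,
   +1 / -1 = assigned value. *)

Definition assignment (m : nat) := {ffun 'I_m -> int}.

Definition score (m : nat) (e : rel 'I_m) (x : assignment m) : int :=
  \sum_(u < m) \sum_(v < m | e u v && (u < v)%N) x u * x v.

(* outcome code: 1 = P wins, 0 = draw, -1 = N wins *)
Definition final_result (m : nat) (e : rel 'I_m) (x : assignment m) : int :=
  sgz (score e x).

Definition assign (m : nat) (x : assignment m) (v : 'I_m) (s : int)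
  : assignment m := [ffun u => if u == v then s else x u].

Definition moves (m : nat) (x : assignment m) : seq ('I_m * int) :=
  [seq (v, s) | v <- [seq v <- enum 'I_m | x v == 0], s <- [:: 1; -1]].

(* P maximizes the outcome code, N minimizes it; since the
   outcome ordering N-win < draw < P-win encodes exactly "primary goal win,
   secondary goal draw", this is the result under optimal play.
   The fuel k only serves termination; with fuel = number of vertices the
   game always ends (each move assigns a vertex) before fuel runs out.
   Values lie in {-1,0,1}, so foldr max/min with initial -1/1 is the max/min
   over the (nonempty) list of successor values. *)
Fixpoint game_value (m : nat) (e : rel 'I_m) (k : nat) (turnP : bool)
    (x : assignment m) : int :=
  match k with
  | 0 => final_result e x
  | k'.+1 =>
    let ms := moves x in
    if ms is [::] then final_result e x else
    let vals := [seq game_value e k' (~~ turnP) (assign x p.1 p.2) | p <- ms] in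
    if turnP then foldr Num.max (-1) vals else foldr Num.min 1 vals
  end.

Inductive outcome := Draw | Player1Wins | Player2Wins.

(* Result of the Sign Game on graph e under optimal play, with
   [P_first] = true iff Player P is Player 1. *)
Definition sign_game_result (m : nat) (e : rel 'I_m) (P_first : bool) : outcome :=
  let v := game_value e m P_first [ffun => 0] in
  if v == 0 then Draw
  else if (v == 1) == P_first then Player1Wins else Player2Wins.

Definition star_rel (n : nat) : rel 'I_n.+1 :=
  fun u v => ((u == 0 :> nat) && (v != 0 :> nat)) || ((v == 0 :> nat) && (u != 0 :> nat)).
Arguments star_rel n u v : clear implicits.

From mathcomp Require Import all_boot all_order all_algebra.
From mathcomp Require Import zify.
Set Implicit Arguments. Unset Strict Implicit. Unset Printing Implicit Defensive.
Import Order.TTheory GRing.Theory Num.Theory.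
Local Open Scope ring_scope.

(* Once the centre carries a value c, every leaf move shifts c * S (S the sum
   of the leaves) by one in the mover's favour, so the leaf moves cancel in
   pairs and the player making the last one gains a single unit: the outcome
   is sgn(c S +- [an odd number of leaves is free]).  While the centre is
   free, claiming it is never worse than playing a leaf: P sets it to agree
   with the sign of S, N to disagree.  Starting from the empty board (S = 0,
   n free leaves) the first player claims the centre and the second one makes
   the last leaf move exactly when n is odd.  This closed form is verified to
   be the minimax value: no move improves it for the mover, and some move
   preserves it. *)

Section FoldrExtremum.
Context {disp : Order.disp_t} {T : orderType disp}.
Local Open Scope order_scope.

Lemma foldr_max_eq (l : seq T) y0 a :
  y0 <= a -> {in l, forall y, y <= a} -> a \in l -> foldr Order.max y0 l = a.
Proof.
move=> le_y0a ub_a la; apply/le_anti/andP; split.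
- elim: l ub_a {la} => //= y l IHl ub_a.
  by rewrite ge_max ub_a ?mem_head // IHl // => z lz; rewrite ub_a // inE lz orbT.
- elim: l la {ub_a} => //= y l IHl; rewrite inE le_max.
  by case/orP=> [/eqP->|/IHl->]; rewrite ?lexx ?orbT.
Qed.

Lemma foldr_min_eq (l : seq T) y0 a :
  a <= y0 -> {in l, forall y, a <= y} -> a \in l -> foldr Order.min y0 l = a.
Proof.
move=> le_ay0 lb_a la; apply/le_anti/andP; split.
- elim: l la {lb_a} => //= y l IHl; rewrite inE ge_min.
  by case/orP=> [/eqP->|/IHl->]; rewrite ?lexx ?orbT.
- elim: l lb_a {la} => //= y l IHl lb_a.
  by rewrite le_min lb_a ?mem_head // IHl // => z lz; rewrite lb_a // inE lz orbT.
Qed.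

End FoldrExtremum.

Definition le_for (t : bool) (a b : int) := if t then a <= b else b <= a.

Section Minimax.
Variables (m : nat) (e : rel 'I_m).
Implicit Types (x : assignment m) (t : bool).

Definition unassigned x := #|[set i | x i == 0]|.

Lemma mem_moves x v s :
  ((v, s) \in moves x) = (x v == 0) && (s \in [:: 1; -1]).
Proof.
apply/allpairsP/andP => [[[v' s'] [/= v'x s'pm [-> ->]]]|[xv0 spm]].
  by move: v'x; rewrite mem_filter => /andP[-> _].
by exists (v, s); rewrite /= mem_filter xv0 mem_enum.
Qed.

Lemma moves_nil_full x : moves x = [::] -> forall i, x i != 0.
Proof.
move=> nomove i; apply/negP => /eqP xi0.
by have := mem_moves x i 1; rewrite nomove xi0.
Qed.

Lemma unassigned_assign x v s :
  x v = 0 -> s != 0 -> unassigned x = (unassigned (assign x v s)).+1.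
Proof.
move=> xv0 s_neq0; rewrite /unassigned (cardsD1 v [set i | x i == 0]) inE xv0 eqxx.
rewrite add1n; congr #|pred_of_set _|.+1; apply/setP => i; rewrite !inE ffunE.
by case: (eqVneq i v) => [->|]; rewrite ?eqxx ?(negbTE s_neq0).
Qed.

Section Potential.
Variables (I : pred (assignment m)) (V : bool -> assignment m -> int).
Hypothesis I_assign : forall x v s, I x -> (v, s) \in moves x -> I (assign x v s).
Hypothesis V_range : forall t x, I x -> -1 <= V t x <= 1.
Hypothesis V_final :
  forall t x, I x -> (forall i, x i != 0) -> V t x = final_result e x.
Hypothesis V_move : forall t x v s, I x -> (v, s) \in moves x ->
  le_for t (V (~~ t) (assign x v s)) (V t x).
Hypothesis V_best : forall t x, I x -> moves x != [::] ->
  exists2 p, p \in moves x & V (~~ t) (assign x p.1 p.2) = V t x.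

Lemma game_value_potential k t x :
  I x -> (unassigned x <= k)%N -> game_value e k t x = V t x.
Proof.
elim: k t x => [|k IHk] t x Ix free_x /=.
  apply/esym/V_final => // i; apply/negP => /eqP xi0.
  move: free_x; rewrite leqn0 cards_eq0 => /eqP/setP/(_ i).
  by rewrite !inE xi0.
case nomove: (moves x) => [|p ms]; first by rewrite V_final //; apply: moves_nil_full.
rewrite -nomove.
set child := fun q : 'I_m * int => V (~~ t) (assign x q.1 q.2).
have -> : [seq game_value e k (~~ t) (assign x q.1 q.2) | q <- moves x]
    = map child (moves x).
  apply/eq_in_map => -[v s] /= vs_x; have := vs_x; rewrite mem_moves.
  case/andP=> /eqP xv0 spm; apply: IHk; first exact: I_assign.
  by rewrite -ltnS -(unassigned_assign (s := s) xv0) //; apply: contraTneq spm => ->.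
have [q q_x child_q] : exists2 q, q \in moves x & child q = V t x.
  by apply: V_best; rewrite ?nomove.
have Vx_in : V t x \in map child (moves x) by rewrite -child_q map_f.
have child_le y : y \in map child (moves x) -> le_for t y (V t x).
  by case/mapP=> -[v s] vs_x ->; apply: V_move.
have /andP[ge_m1 le_1] := V_range t Ix.
case: t child {child_q} Vx_in child_le ge_m1 le_1 => child Vx_in child_le ge_m1 le_1.
- exact: foldr_max_eq.
- exact: foldr_min_eq.
Qed.

End Potential.
End Minimax.

Definition mover_sign (t : bool) : int := if t then 1 else -1.

(* Value of a star position for the player to move ([t]), where [c] is the
   centre (0 if free), [S] the sum of the leaves and [b] tells whether an odd
   number of leaves is free. *)
Definition star_value (t : bool) (c S : int) (b : bool) : int :=
  if c == 0 then mover_sign t * sgz (`|S| - b%:Z)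
  else sgz (c * S + mover_sign t * b%:Z).

Ltac star_arith :=
  rewrite /le_for /star_value /mover_sign /=;
  repeat match goal with
  | |- context [if _ then _ else _] => case: ifP => ?
  end; lia.

Lemma star_value_range t c S b : -1 <= star_value t c S b <= 1.
Proof. by case: t; case: b; star_arith. Qed.

Lemma star_value_leaf t c S s b : c \in [:: -1; 0; 1] -> s \in [:: 1; -1] ->
  le_for t (star_value (~~ t) c (S + s) (~~ b)) (star_value t c S b).
Proof.
by rewrite !inE => /or3P[]/eqP-> /orP[]/eqP->; case: t; case: b; star_arith.
Qed.

Lemma star_value_centre t S s b : s \in [:: 1; -1] ->
  le_for t (star_value (~~ t) s S b) (star_value t 0 S b).
Proof. by rewrite !inE => /orP[]/eqP->; case: t; case: b; star_arith. Qed.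

Lemma star_value_best_leaf t c S b : c \in [:: 1; -1] ->
  star_value (~~ t) c (S + mover_sign t * c) (~~ b) = star_value t c S b.
Proof. by rewrite !inE => /orP[]/eqP->; case: t; case: b; star_arith. Qed.

Lemma star_value_best_centre t S b :
  star_value (~~ t) (mover_sign t * (if S < 0 then -1 else 1)) S b
  = star_value t 0 S b.
Proof. by case: (boolP (S < 0)) => ?; case: t; case: b; star_arith. Qed.

Section Star.
Variable n : nat.
Implicit Types (x : assignment n.+1) (t : bool).

Definition leaf_sum x : int := \sum_(i < n.+1 | i != ord0) x i.
Definition free_leaves x := #|[set i : 'I_n.+1 | (i != ord0) && (x i == 0)]|.
Definition star_potential t x :=
  star_value t (x ord0) (leaf_sum x) (odd (free_leaves x)).
Definition centre_signed x := x ord0 \in [:: -1; 0; 1].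

Lemma score_star x : score (star_rel n) x = x ord0 * leaf_sum x.
Proof.
rewrite /score (bigD1 ord0) //= [X in _ + X]big1 ?addr0; last first.
  move=> u u_neq0; apply: big1 => v /andP[uv u_lt_v]; exfalso.
  by move: u_neq0 uv u_lt_v; rewrite /star_rel -val_eqE /=; lia.
rewrite /leaf_sum mulr_sumr; apply: eq_bigl => v.
by rewrite /star_rel -val_eqE /=; lia.
Qed.

Lemma leaf_sum_assign_centre x s : leaf_sum (assign x ord0 s) = leaf_sum x.
Proof. by apply: eq_bigr => i i_neq0; rewrite ffunE (negbTE i_neq0). Qed.

Lemma free_leaves_assign_centre x s : free_leaves (assign x ord0 s) = free_leaves x.
Proof.
congr #|pred_of_set _|; apply/setP => i; rewrite !inE ffunE.
by case: (eqVneq i ord0).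
Qed.

Lemma leaf_sum_assign_leaf x v s : v != ord0 -> x v = 0 ->
  leaf_sum (assign x v s) = leaf_sum x + s.
Proof.
move=> v_neq0 xv0; rewrite /leaf_sum !(bigD1 v v_neq0) /= ffunE eqxx xv0 add0r addrC.
congr (_ + _); apply: eq_bigr => i /andP[_ i_neq_v].
by rewrite ffunE (negbTE i_neq_v).
Qed.

Lemma odd_free_leaves_assign_leaf x v s : v != ord0 -> x v = 0 -> s != 0 ->
  odd (free_leaves (assign x v s)) = ~~ odd (free_leaves x).
Proof.
move=> v_neq0 xv0 s_neq0.
rewrite /free_leaves (cardsD1 v [set i | (i != ord0) && (x i == 0)]) inE v_neq0 xv0.
rewrite eqxx add1n /= negbK; congr (odd #|pred_of_set _|); apply/setP => i.
by rewrite !inE ffunE; case: (eqVneq i v) => [->|]; rewrite ?(negbTE s_neq0) ?andbF.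
Qed.

Lemma centre_signed_assign x v s : centre_signed x -> (v, s) \in moves x ->
  centre_signed (assign x v s).
Proof.
rewrite /centre_signed mem_moves ffunE => cx /andP[_]; case: ifP => // _.
by rewrite !inE => /orP[]/eqP->.
Qed.

Lemma star_potential_final t x :
  (forall i, x i != 0) -> star_potential t x = final_result (star_rel n) x.
Proof.
move=> x_full; rewrite /star_potential; have -> : free_leaves x = 0%N.
  apply/eqP; rewrite cards_eq0; apply/eqP/setP => i.
  by rewrite !inE (negbTE (x_full i)) andbF.
by rewrite /star_value /final_result score_star (negbTE (x_full _)) mulr0 addr0.
Qed.

Lemma star_potential_move t x v s : centre_signed x -> (v, s) \in moves x ->
  le_for t (star_potential (~~ t) (assign x v s)) (star_potential t x).
Proof.
rewrite mem_moves /star_potential => cx /andP[/eqP xv0 spm].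
case: (eqVneq v ord0) xv0 => [-> xc0|v_neq0 xv0].
  rewrite ffunE eqxx leaf_sum_assign_centre free_leaves_assign_centre xc0.
  exact: star_value_centre.
rewrite ffunE eq_sym (negbTE v_neq0) leaf_sum_assign_leaf //.
rewrite odd_free_leaves_assign_leaf //; first exact: star_value_leaf.
by apply: contraTneq spm => ->.
Qed.

Lemma star_potential_best t x : centre_signed x -> moves x != [::] ->
  exists2 p, p \in moves x &
    star_potential (~~ t) (assign x p.1 p.2) = star_potential t x.
Proof.
rewrite /star_potential => cx has_move.
have [c0|c_neq0] := eqVneq (x ord0) 0.
  exists (ord0, mover_sign t * (if leaf_sum x < 0 then -1 else 1)).
    by rewrite mem_moves c0 eqxx; case: t; case: ifP.
  rewrite /= ffunE eqxx leaf_sum_assign_centre free_leaves_assign_centre c0.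
  exact: star_value_best_centre.
have c_pm1 : x ord0 \in [:: 1; -1].
  by move: cx c_neq0; rewrite /centre_signed !inE; lia.
have [[v s]] : exists p, p \in moves x.
  by case: (moves x) has_move => // p ms _; exists p; rewrite mem_head.
rewrite mem_moves => /andP[/eqP xv0 _].
have v_neq0 : v != ord0 by apply: contra_neq c_neq0 => <-.
exists (v, mover_sign t * x ord0).
  by rewrite mem_moves xv0 eqxx; move: c_pm1; rewrite /mover_sign !inE; case: t; lia.
rewrite /= ffunE eq_sym (negbTE v_neq0) leaf_sum_assign_leaf //.
rewrite odd_free_leaves_assign_leaf //; first exact: star_value_best_leaf.
by move: c_pm1; rewrite /mover_sign !inE; case: t; lia.
Qed.

Lemma game_value_star k t x : centre_signed x -> (unassigned x <= k)%N ->
  game_value (star_rel n) k t x = star_potential t x.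
Proof.
apply: game_value_potential.
- exact: centre_signed_assign.
- by move=> t' y _; apply: star_value_range.
- by move=> t' y _; apply: star_potential_final.
- exact: star_potential_move.
- exact: star_potential_best.
Qed.

End Star.

Theorem theorem2 (n : nat) (P_first : bool) : (1 <= n)%N ->
  sign_game_result (star_rel n) P_first =
  (if odd n then Player2Wins else Draw).
Proof.
move=> _; rewrite /sign_game_result.
set empty : assignment n.+1 := [ffun => 0].
have centre_empty : centre_signed empty by rewrite /centre_signed ffunE.
have free_empty : (unassigned empty <= n.+1)%N.
  by rewrite (leq_trans (max_card _)) ?card_ord.
rewrite game_value_star // /star_potential ffunE.
have -> : leaf_sum empty = 0 by rewrite /leaf_sum big1 // => i _; rewrite ffunE.
have -> : free_leaves empty = n.
  rewrite /free_leaves (_ : [set i | _] = [set~ ord0]) ?cardsC1 ?card_ord //.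
  by apply/setP => i; rewrite !inE ffunE eqxx andbT.
by case: P_first; case: (odd n).
Qed.
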